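(* Let $P(\vec\alpha,\vec\beta,\vec\xi),P'(\vec\alpha,\vec\beta,\vec\xi)\in\mathcal{P}$ be two syntactically compositional predicates with the same parameters, and suppose $P'$ is stronger than $P$. Then the entailments $P'(\vec\alpha,\vec\beta,\vec\xi)\Rightarrow P(\vec\alpha,\vec\beta,\vec\xi)$ and $\exists\vec\beta.\ P'(\vec\alpha,\vec\beta,\vec\xi)\ast P(\vec\beta,\vec\gamma,\vec\xi)\Rightarrow P(\vec\alpha,\vec\gamma,\vec\xi)$ hold (for any pair $\vec\gamma$ of a location and a data variable).
   Context: Separation logic setting: location variables (interpreted in a set $\mathbb{L}$ of locations, with a constant ${\sf nil}$) and data variables; pointer fields $\mathcal{F}$ and data fields $\mathcal{D}$. A state is $(s,h)$ with $s$ a stack assigning values to variables and $h$ a finite partial heap mapping (location, field) pairs to locations or data values. Formulas: pure parts (location (dis)equalities and data constraints in a decidable theory), spatial parts $\mathtt{emp}$, $E\mapsto\rho$, predicate atoms, $\ast$ (separating conjunction over domain-disjoint heaps), with $\land,\lor,\exists$. Predicates are defined by finite sets of rules $Q(E,\vec F)::=\exists\vec Z.\Pi\land\Sigma$ with least-fixed-point semantics; an entailment $A\Rightarrow B$ means every $(s,h)$ satisfying $A$ satisfies $B$. Syntactic compositionality: $P$ has parameters $(\vec\alpha,\vec\beta,\vec\xi)$, $\vec\alpha=(E,C)$ (source), $\vec\beta=(F,H)$ (hole), $E,F$ location variables, $C,H$ data variables, $\vec\xi$ static parameters. $P$ is syntactically compositional if it has exactly one base rule $P(\vec\alpha,\vec\beta,\vec\xi)::=\alpha_1=\beta_1\land\alpha_2=\beta_2\land\mathtt{emp}$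 and at least one inductive rule, every inductive rule being of the form $P(\vec\alpha,\vec\beta,\vec\xi)::=\exists\vec Z.\ \Pi\land\Sigma_1\ast\Sigma_2\ast P(\vec\gamma,\vec\beta,\vec\xi)$ where $\Sigma_1$ is a nonempty separating conjunction of points-to atoms containing a unique points-to atom from $E$ and all location variables of $\vec Z$, whose Gaifman graph is a connected DAG rooted at $E$; $\Sigma_2$ is a possibly empty separating conjunction of predicate atoms whose first arguments are sink vertices of that graph; $\vec\gamma$ consists of variables of $\vec Z$; and the variables of $\vec\beta$ do not occur in $\Pi,\Sigma_1,\Sigma_2,\vec\gamma$. Stronger: $P'$ is stronger than $P$ if for each inductive rule $P'(\vec\alpha,\vec\beta,\vec\xi)::=\exists\vec Z.\ \Pi'\land\Sigma_1\ast\Sigma_2\ast P'(\vec\gamma,\vec\beta,\vec\xi)$ of $P'$ there is an inductive rule $P(\vec\alpha,\vec\beta,\vec\xi)::=\exists\vec Z.\ \Pi\land\Sigma_1\ast\Sigma_2\ast P(\vec\gamma,\vec\beta,\vec\xi)$ of $P$ (same $\vec Z,\Sigma_1,\Sigma_2,\vec\gamma$) such that $\Pi'\Rightarrow\Pi$ is valid. *)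

From Stdlib Require Import List Permutation Relations Arith.
Import ListNotations.
Set Implicit Arguments.

Inductive var := LV (n : nat) | DV (n : nat).
Inductive lterm := LVar (n : nat) | LNil.
Inductive arg := AL (t : lterm) | AD (n : nat).
Inductive field := PF (n : nat) | DF (n : nat).
Inductive fentry := FPtr (f : nat) (t : lterm) | FDat (f : nat) (d : nat).

Definition var_arg (v : var) : arg :=
  match v with LV n => AL (LVar n) | DV n => AD n end.

Definition entry_field (e : fentry) : field :=
  match e with FPtr f _ => PF f | FDat f _ => DF f end.

Section Syntax.
Variable D : Type.

(* pure atoms: location (dis)equalities, data equality, and data
   constraints of the data theory (an arbitrary relation on the values
   of the listed data variables) *)
Inductive pure_atom :=
| PLEq (a b : lterm)
| PLNeq (a b : lterm)
| PDEq (c d : nat)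
| PData (R : list D -> Prop) (xs : list nat).

Inductive satom :=
| SPto (x : lterm) (rho : list fentry)
| SPred (p : nat) (args : list arg).

(* rule  Q(params) ::= exists rZ. (/\ rpure) /\ ( * rspatial) *)
Record rule := { rZ : list var; rpure : list pure_atom; rspatial : list satom }.
Record pdef := { pparams : list var; prules : list rule }.

Inductive formula :=
| FPure (a : pure_atom)
| FEmp
| FPto (x : lterm) (rho : list fentry)
| FPred (p : nat) (args : list arg)
| FStar (f g : formula)
| FAnd (f g : formula)
| FOr (f g : formula)
| FEx (v : var) (f : formula).

Definition satom_formula (a : satom) : formula :=
  match a with SPto x rho => FPto x rho | SPred p args => FPred p args end.

Definition star_list (l : list satom) : formula :=
  fold_right (fun a f => FStar (satom_formula a) f) FEmp l.

Definition rule_formula (r : rule) : formula :=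
  fold_right FEx
    (fold_right (fun a f => FAnd (FPure a) f) (star_list r.(rspatial)) r.(rpure))
    r.(rZ).

Definition lterm_lvars (t : lterm) : list nat :=
  match t with LVar n => [n] | LNil => [] end.
Definition lterm_vars (t : lterm) : list var := map LV (lterm_lvars t).
Definition arg_vars (a : arg) : list var :=
  match a with AL t => lterm_vars t | AD n => [DV n] end.
Definition fentry_vars (e : fentry) : list var :=
  match e with FPtr _ t => lterm_vars t | FDat _ d => [DV d] end.
Definition pure_vars (a : pure_atom) : list var :=
  match a with
  | PLEq x y | PLNeq x y => lterm_vars x ++ lterm_vars y
  | PDEq c d => [DV c; DV d]
  | PData _ xs => map DV xs
  end.
Definition satom_vars (a : satom) : list var :=
  match a with
  | SPto x rho => lterm_vars x ++ flat_map fentry_vars rho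
  | SPred _ args => flat_map arg_vars args
  end.

Definition is_pto (a : satom) : Prop :=
  match a with SPto _ _ => True | SPred _ _ => False end.
Definition is_pred (a : satom) : Prop :=
  match a with SPto _ _ => False | SPred _ _ => True end.

Definition ptr_targets (rho : list fentry) : list nat :=
  flat_map (fun e => match e with FPtr _ t => lterm_lvars t | FDat _ _ => [] end) rho.

(* vertices of the Gaifman graph of Sigma1: location variables occurring in it *)
Definition gvertices (S1 : list satom) : list nat :=
  flat_map (fun a => match a with
                     | SPto x rho => lterm_lvars x ++ ptr_targets rho
                     | SPred _ _ => [] end) S1.
Definition gedge (S1 : list satom) (x y : nat) : Prop :=
  exists rho, In (SPto (LVar x) rho) S1 /\ In y (ptr_targets rho).

Definition is_sink (S1 : list satom) (x : nat) : Prop :=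
  In x (gvertices S1) /\ forall y, ~ gedge S1 x y.

Definition pto_from (E : nat) (a : satom) : bool :=
  match a with SPto (LVar n) _ => Nat.eqb n E | _ => false end.

(* parameter list (alpha, beta, xi) = (E, C, F, H, xi) *)
Definition comp_params (E C F H : nat) (xi : list var) : list var :=
  [LV E; DV C; LV F; DV H] ++ xi.

(* the recursive atom p(gamma, beta, xi), gamma = (g1, g2) *)
Definition rec_atom (p : nat) (g1 g2 F H : nat) (xi : list var) : satom :=
  SPred p (AL (LVar g1) :: AD g2 :: AL (LVar F) :: AD H :: map var_arg xi).

(* r has the shape  exists Z. Pi /\ Sigma1 * Sigma2 * p(gamma, beta, xi)
   (the spatial part read up to associativity/commutativity of * ) *)
Definition ind_shape (p : nat) (F H : nat) (xi : list var) (r : rule)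
  (S1 S2 : list satom) (g1 g2 : nat) : Prop :=
  Permutation r.(rspatial) (S1 ++ S2 ++ [rec_atom p g1 g2 F H xi])
  /\ Forall is_pto S1 /\ Forall is_pred S2.

Definition comp_ind_rule (p E C F H : nat) (xi : list var) (r : rule) : Prop :=
  exists S1 S2 g1 g2,
    ind_shape p F H xi r S1 S2 g1 g2
    /\ NoDup r.(rZ)
    /\ (forall v, In v r.(rZ) -> ~ In v (comp_params E C F H xi))
    /\ S1 <> []
    /\ length (filter (pto_from E) S1) = 1
    /\ (forall n, In (LV n) r.(rZ) -> In n (gvertices S1))
    /\ (forall v, In v (gvertices S1) -> clos_refl_trans nat (gedge S1) E v)
    /\ (forall v, ~ clos_trans nat (gedge S1) v v)
    /\ (forall q args, In (SPred q args) S2 ->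
          exists n rest, args = AL (LVar n) :: rest /\ is_sink S1 n)
    /\ In (LV g1) r.(rZ) /\ In (DV g2) r.(rZ)
    /\ (forall v, v = LV F \/ v = DV H ->
          ~ In v (flat_map pure_vars r.(rpure))
          /\ ~ In v (flat_map satom_vars S1)
          /\ ~ In v (flat_map satom_vars S2)
          /\ v <> LV g1 /\ v <> DV g2).

Definition is_base_rule (E C F H : nat) (r : rule) : Prop :=
  r.(rZ) = []
  /\ Permutation r.(rpure) [PLEq (LVar E) (LVar F); PDEq C H]
  /\ r.(rspatial) = [].

Definition syn_compositional (defs : nat -> pdef) (p E C F H : nat) (xi : list var) : Prop :=
  (defs p).(pparams) = comp_params E C F H xi
  /\ NoDup (comp_params E C F H xi)
  /\ exists rb rest,
       Permutation (defs p).(prules) (rb :: rest)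
       /\ is_base_rule E C F H rb
       /\ rest <> []
       /\ Forall (comp_ind_rule p E C F H xi) rest.

End Syntax.

Arguments PLEq {D} : rename. Arguments PLNeq {D} : rename. Arguments PDEq {D} : rename. Arguments PData {D} : rename.
Arguments SPto {D} : rename. Arguments SPred {D} : rename.
Arguments FPure {D} : rename. Arguments FEmp {D} : rename. Arguments FPto {D} : rename. Arguments FPred {D} : rename.
Arguments FStar {D} : rename. Arguments FAnd {D} : rename. Arguments FOr {D} : rename. Arguments FEx {D} : rename.

Section Semantics.
Variables (L : Type) (nil : L) (D : Type).

Inductive val := VL (l : L) | VD (d : D).
Record stack := { sL : nat -> L; sD : nat -> D }.
Definition heap := L -> field -> option val.

Definition hfinite (h : heap) : Prop :=
  exists dom : list (L * field), forall l f, h l f <> None -> In (l, f) dom.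
Definition hdisjoint (h1 h2 : heap) : Prop :=
  forall l f, h1 l f = None \/ h2 l f = None.
Definition hunion (h1 h2 : heap) : heap :=
  fun l f => match h1 l f with Some v => Some v | None => h2 l f end.

Definition eval_l (s : stack) (t : lterm) : L :=
  match t with LVar n => s.(sL) n | LNil => nil end.
Definition eval_arg (s : stack) (a : arg) : val :=
  match a with AL t => VL (eval_l s t) | AD n => VD (s.(sD) n) end.
Definition eval_var (s : stack) (v : var) : val :=
  match v with LV n => VL (s.(sL) n) | DV n => VD (s.(sD) n) end.
Definition eval_entry (s : stack) (e : fentry) : val :=
  match e with FPtr _ t => VL (eval_l s t) | FDat _ d => VD (s.(sD) d) end.

Definition updL (s : stack) (n : nat) (l : L) : stack :=
  {| sL := fun m => if Nat.eqb m n then l else s.(sL) m; sD := s.(sD) |}.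
Definition updD (s : stack) (n : nat) (d : D) : stack :=
  {| sL := s.(sL); sD := fun m => if Nat.eqb m n then d else s.(sD) m |}.

Definition pure_sat (s : stack) (a : pure_atom D) : Prop :=
  match a with
  | @PLEq _ x y => eval_l s x = eval_l s y
  | @PLNeq _ x y => eval_l s x <> eval_l s y
  | @PDEq _ c d => s.(sD) c = s.(sD) d
  | @PData _ R xs => R (map s.(sD) xs)
  end.

Fixpoint sat (I : nat -> list val -> heap -> Prop) (s : stack) (h : heap)
         (f : formula D) : Prop :=
  match f with
  | @FPure _ a => pure_sat s a
  | @FEmp _ => forall l fl, h l fl = None
  | @FPto _ x rho =>
      eval_l s x <> nil
      /\ (forall l fl, h l fl <> None -> l = eval_l s x /\ In fl (map entry_field rho))
      /\ Forall (fun e => h (eval_l s x) (entry_field e) = Some (eval_entry s e)) rho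
  | @FPred _ p args => I p (map (eval_arg s) args) h
  | @FStar _ f1 f2 =>
      exists h1 h2, hdisjoint h1 h2 /\ (forall l fl, h l fl = hunion h1 h2 l fl)
                    /\ sat I s h1 f1 /\ sat I s h2 f2
  | @FAnd _ f1 f2 => sat I s h f1 /\ sat I s h f2
  | @FOr _ f1 f2 => sat I s h f1 \/ sat I s h f2
  | @FEx _ (LV n) f1 => exists l, sat I (updL s n l) h f1
  | @FEx _ (DV n) f1 => exists d, sat I (updD s n d) h f1
  end.

Variable defs : nat -> pdef D.

Definition closed (I : nat -> list val -> heap -> Prop) : Prop :=
  forall p r s h, In r (defs p).(prules) -> sat I s h (rule_formula r) ->
    I p (map (eval_var s) (defs p).(pparams)) h.

Definition psem (p : nat) (vs : list val) (h : heap) : Prop :=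
  forall I, closed I -> I p vs h.

Definition models (s : stack) (h : heap) (f : formula D) : Prop := sat psem s h f.

Definition entails (A B : formula D) : Prop :=
  forall s h, hfinite h -> models s h A -> models s h B.

Definition pure_valid (Pi' Pi : list (pure_atom D)) : Prop :=
  forall s, Forall (pure_sat s) Pi' -> Forall (pure_sat s) Pi.

End Semantics.

Definition stronger {L : Type} (nil : L) {D : Type} (defs : nat -> pdef D) (P' P F H : nat) (xi : list var) : Prop :=
  forall r' S1 S2 g1 g2,
    In r' (defs P').(prules) -> ind_shape P' F H xi r' S1 S2 g1 g2 ->
    exists r, In r (defs P).(prules)
              /\ r.(rZ) = r'.(rZ)
              /\ ind_shape P F H xi r S1 S2 g1 g2
              /\ pure_valid nil r'.(rpure) r.(rpure).

(* For the first, an unfolding of P' along one of its inductive rules is also an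
   unfolding of P along the matching rule of P, whose pure part is weaker.  For
   the second, P' is first weakened to P, and one then inducts on the derivation
   of the first P-segment: the base rule makes it empty with source equal to
   hole, and an inductive rule can be re-instantiated with the new hole, because
   the hole (F, H) occurs only in the recursive atom, which absorbs the second
   segment by the induction hypothesis. *)
From Stdlib Require Import List Permutation Arith FunctionalExtensionality.
Import ListNotations.

Section Heaps.
Context {L D : Type}.

Definition sep (A B : heap L D -> Prop) (h : heap L D) : Prop :=
  exists h1 h2, hdisjoint h1 h2 /\ (forall l f, h l f = hunion h1 h2 l f) /\ A h1 /\ B h2.

Lemma heap_ext {h h' : heap L D} : (forall l f, h l f = h' l f) -> h = h'.
Proof.
  intro Hext. apply functional_extensionality; intro l.
  apply functional_extensionality; intro f. apply Hext.
Qed.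

Lemma sep_mono (A A' B B' : heap L D -> Prop) h :
  (forall k, A k -> A' k) -> (forall k, B k -> B' k) -> sep A B h -> sep A' B' h.
Proof. intros HA HB (h1 & h2 & ? & ? & ? & ?). exists h1, h2; auto. Qed.

Lemma sep_comm (A B : heap L D -> Prop) h : sep A B h -> sep B A h.
Proof.
  intros (h1 & h2 & Hd & He & ? & ?). exists h2, h1. repeat split; auto.
  - intros l f; destruct (Hd l f); auto.
  - intros l f; rewrite He; unfold hunion; destruct (Hd l f) as [E|E]; rewrite E;
    destruct (h1 l f), (h2 l f); congruence.
Qed.

Lemma sep_assoc (A B C : heap L D -> Prop) h : sep A (sep B C) h -> sep (sep A B) C h.
Proof.
  intros (h1 & k & Hd & He & HA & (h2 & h3 & Hd2 & He2 & HB & HC)).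
  assert (Hd12 : forall l f, h1 l f = None \/ h2 l f = None).
  { intros l f. specialize (Hd l f). specialize (Hd2 l f). rewrite (He2 l f) in Hd.
    unfold hunion in *. destruct (h1 l f), (h2 l f), (h3 l f); intuition congruence. }
  exists (hunion h1 h2), h3. repeat split.
  - intros l f. specialize (Hd l f). specialize (Hd2 l f). rewrite (He2 l f) in Hd.
    unfold hunion in *. destruct (h1 l f), (h2 l f), (h3 l f); intuition congruence.
  - intros l f. rewrite He. unfold hunion. rewrite He2. unfold hunion.
    destruct (h1 l f), (h2 l f); auto.
  - exists h1, h2. auto.
  - exact HC.
Qed.

Lemma sep_swap (A B C : heap L D -> Prop) h : sep A (sep B C) h -> sep B (sep A C) h.
Proof.
  intro Hs. apply sep_assoc, sep_comm, sep_assoc, sep_comm in Hs.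
  revert Hs. apply sep_mono; auto. intros k; apply sep_comm.
Qed.

Lemma hdisjoint_frame {h hR hA h2 : heap L D} :
  hdisjoint hR hA -> (forall l f, h l f = hunion hR hA l f) -> hdisjoint h h2 ->
  hdisjoint hR h2 /\ hdisjoint (hunion hR h2) hA /\
  forall l f, hunion h h2 l f = hunion (hunion hR h2) hA l f.
Proof.
  intros Hd He Hd2. repeat split; intros l f;
  specialize (Hd l f); specialize (Hd2 l f); specialize (He l f);
  unfold hunion in *; rewrite ?He in *;
  destruct (hR l f), (hA l f), (h2 l f); intuition congruence.
Qed.

End Heaps.

Section Stacks.
Context {L D : Type}.

Lemma stack_ext (s t : stack L D) :
  (forall v, eval_var s v = eval_var t v) -> s = t.
Proof.
  destruct s as [sl sd], t as [tl td]; intro Hst.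
  f_equal; apply functional_extensionality; intro n;
    [specialize (Hst (LV n)) | specialize (Hst (DV n))]; simpl in Hst; congruence.
Qed.

Definition agree (s t : stack L D) (vs : list var) : Prop :=
  forall v, In v vs -> eval_var s v = eval_var t v.

Lemma agree_sub {s t : stack L D} {vs ws} :
  agree s t ws -> incl vs ws -> agree s t vs.
Proof. unfold agree, incl; auto. Qed.

Lemma agree_eval_l (nil : L) (s t : stack L D) x :
  agree s t (lterm_vars x) -> eval_l nil s x = eval_l nil t x.
Proof.
  destruct x as [n|]; simpl; auto. intro Hst.
  specialize (Hst (LV n) (or_introl eq_refl)). simpl in Hst. congruence.
Qed.

Lemma agree_sD (s t : stack L D) n : agree s t [DV n] -> sD s n = sD t n.
Proof. intro Hst. specialize (Hst (DV n) (or_introl eq_refl)). simpl in Hst. congruence. Qed.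

Lemma agree_eval_arg (nil : L) (s t : stack L D) a :
  agree s t (arg_vars a) -> eval_arg nil s a = eval_arg nil t a.
Proof.
  destruct a; simpl; intro Hst; [rewrite (agree_eval_l nil s t) | rewrite (agree_sD s t)]; auto.
Qed.

Lemma agree_eval_entry (nil : L) (s t : stack L D) e :
  agree s t (fentry_vars e) -> eval_entry nil s e = eval_entry nil t e.
Proof.
  destruct e; simpl; intro Hst; [rewrite (agree_eval_l nil s t) | rewrite (agree_sD s t)]; auto.
Qed.

Lemma map_eval_arg_var (nil : L) (s : stack L D) vs :
  map (eval_arg nil s) (map var_arg vs) = map (eval_var s) vs.
Proof. rewrite map_map. apply map_ext. intros []; reflexivity. Qed.

Definition upd_hole (s : stack L D) (F H : nat) (a : L) (b : D) : stack L D :=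
  updD (updL s F a) H b.

Lemma eval_var_upd_hole s F H a b v :
  v <> LV F -> v <> DV H -> eval_var (upd_hole s F H a b) v = eval_var s v.
Proof.
  intros HF HH. destruct v as [m|m]; simpl.
  - destruct (Nat.eqb_spec m F); congruence.
  - destruct (Nat.eqb_spec m H); congruence.
Qed.

Lemma map_eval_var_upd_hole s F H a b vs :
  ~ In (LV F) vs -> ~ In (DV H) vs ->
  map (eval_var (upd_hole s F H a b)) vs = map (eval_var s) vs.
Proof.
  intros HF HH. apply map_ext_in. intros v Hv.
  apply eval_var_upd_hole; intros ->; auto.
Qed.

End Stacks.

Section Satisfaction.
Context {L : Type} (nil : L) {D : Type}.
Implicit Types (I J : nat -> list (val L D) -> heap L D -> Prop) (s t : stack L D).

Lemma sat_mono I J :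
  (forall p vs h, I p vs h -> J p vs h) ->
  forall f s h, sat nil I s h f -> sat nil J s h f.
Proof.
  intros HIJ f. induction f as [| | | |f1 IH1 f2 IH2|f1 IH1 f2 IH2|f1 IH1 f2 IH2|[n|n] f IH];
    intros s h Hs; simpl in *; auto.
  - destruct Hs as (h1 & h2 & ? & ? & ? & ?). exists h1, h2; auto.
  - intuition.
  - intuition.
  - destruct Hs as [x Hx]; exists x; auto.
  - destruct Hs as [x Hx]; exists x; auto.
Qed.

Lemma Forall_pure_sat_agree s t (Pi : list (pure_atom D)) :
  agree s t (flat_map (@pure_vars D) Pi) ->
  Forall (pure_sat nil s) Pi -> Forall (pure_sat nil t) Pi.
Proof.
  intros Hst HPi. rewrite Forall_forall in *. intros a Ha.
  assert (Hsta : agree s t (pure_vars a)).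
  { apply (agree_sub Hst). intros v Hv. apply in_flat_map; eauto. }
  specialize (HPi a Ha). clear Hst Ha.
  destruct a as [x y|x y|c d|R xs]; simpl in *.
  - rewrite <- (agree_eval_l nil s t x), <- (agree_eval_l nil s t y); auto;
      apply (agree_sub Hsta); intros v Hv; apply in_or_app; auto.
  - rewrite <- (agree_eval_l nil s t x), <- (agree_eval_l nil s t y); auto;
      apply (agree_sub Hsta); intros v Hv; apply in_or_app; auto.
  - rewrite <- (agree_sD s t c), <- (agree_sD s t d); auto;
      apply (agree_sub Hsta); intros v Hv; simpl in *; tauto.
  - replace (map (sD t) xs) with (map (sD s) xs); auto.
    apply map_ext_in. intros n Hn. apply agree_sD. apply (agree_sub Hsta).
    intros v [<-|[]]. apply in_map; auto.
Qed.

Lemma sat_satom_agree I s t a h :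
  agree s t (satom_vars a) ->
  sat nil I s h (satom_formula D a) -> sat nil I t h (satom_formula D a).
Proof.
  destruct a as [x rho|p args]; simpl; intros Hst Hs.
  - assert (Ex : eval_l nil s x = eval_l nil t x).
    { apply agree_eval_l. apply (agree_sub Hst). intros v Hv; apply in_or_app; auto. }
    rewrite <- Ex. destruct Hs as (Hx & Hdom & Hpts). split; [exact Hx|split; [exact Hdom|]].
    rewrite Forall_forall in *. intros e He. rewrite Hpts by exact He.
    f_equal. apply agree_eval_entry. apply (agree_sub Hst).
    intros v Hv. apply in_or_app; right. apply in_flat_map; eauto.
  - replace (map (eval_arg nil t) args) with (map (eval_arg nil s) args); auto.
    apply map_ext_in. intros a Ha. apply agree_eval_arg. apply (agree_sub Hst).
    intros v Hv. apply in_flat_map; eauto.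
Qed.

Lemma sat_star_list_agree I s t (l : list satom) h :
  agree s t (flat_map satom_vars l) ->
  sat nil I s h (star_list D l) -> sat nil I t h (star_list D l).
Proof.
  revert h. induction l as [|a l IH]; intros h Hst Hs; auto.
  revert Hs. apply sep_mono; intros k Hk.
  - eapply sat_satom_agree; [|exact Hk]. apply (agree_sub Hst). intros v Hv. apply in_or_app; auto.
  - apply IH; auto. apply (agree_sub Hst). intros v Hv. apply in_or_app; auto.
Qed.

Lemma sat_star_list_perm I s (l1 l2 : list satom) h :
  Permutation l1 l2 -> sat nil I s h (star_list D l1) -> sat nil I s h (star_list D l2).
Proof.
  intro Hp. revert h. induction Hp; intros h Hs; auto.
  - revert Hs. apply sep_mono; auto.
  - apply sep_swap, Hs.
Qed.

Lemma sat_fold_FEx I s h (Z : list var) f :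
  sat nil I s h (fold_right FEx f Z) <->
  exists s', (forall v, ~ In v Z -> eval_var s' v = eval_var s v) /\ sat nil I s' h f.
Proof.
  revert s. induction Z as [|[n|n] Z IH]; intro s; simpl.
  - split; [intro Hs; exists s; auto|].
    intros (s' & Hs' & Hf). replace s with s'; auto. apply stack_ext; auto.
  - split.
    + intros [x Hx]. apply IH in Hx as (s' & Hs' & Hf). exists s'. split; auto.
      intros v Hv. rewrite Hs' by tauto. destruct v as [m|m]; simpl; auto.
      destruct (Nat.eqb_spec m n); subst; tauto.
    + intros (s' & Hs' & Hf). exists (sL s' n). apply IH. exists s'. split; auto.
      intros [m|m] Hv; simpl.
      * destruct (Nat.eqb_spec m n); subst; auto. apply (Hs' (LV m)); intuition congruence.
      * apply (Hs' (DV m)); intuition congruence.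
  - split.
    + intros [x Hx]. apply IH in Hx as (s' & Hs' & Hf). exists s'. split; auto.
      intros v Hv. rewrite Hs' by tauto. destruct v as [m|m]; simpl; auto.
      destruct (Nat.eqb_spec m n); subst; tauto.
    + intros (s' & Hs' & Hf). exists (sD s' n). apply IH. exists s'. split; auto.
      intros [m|m] Hv; simpl.
      * apply (Hs' (LV m)); intuition congruence.
      * destruct (Nat.eqb_spec m n); subst; auto. apply (Hs' (DV m)); intuition congruence.
Qed.

Lemma sat_fold_FAnd_pure I s h (Pi : list (pure_atom D)) f :
  sat nil I s h (fold_right (fun a g => FAnd (FPure a) g) f Pi) <->
  Forall (pure_sat nil s) Pi /\ sat nil I s h f.
Proof.
  induction Pi as [|a Pi IH]; simpl.
  - intuition.
  - rewrite IH. split; [intros (? & ? & ?) | intros (HF & ?); inversion HF]; auto.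
Qed.

Lemma sat_rule_formula I s h (r : rule D) :
  sat nil I s h (rule_formula r) <->
  exists s', (forall v, ~ In v (rZ r) -> eval_var s' v = eval_var s v)
             /\ Forall (pure_sat nil s') (rpure r)
             /\ sat nil I s' h (star_list D (rspatial r)).
Proof.
  unfold rule_formula. rewrite sat_fold_FEx.
  split; intros (s' & Hs' & Hb); exists s'; rewrite sat_fold_FAnd_pure in *; tauto.
Qed.

End Satisfaction.

Section LeastFixedPoint.
Context {L : Type} (nil : L) {D : Type} (defs : nat -> pdef D).

Lemma psem_closed : closed nil defs (psem nil defs).
Proof.
  intros p r s h Hin Hs I HI. apply (HI p r s h Hin).
  eapply sat_mono; [|exact Hs]. intros q vs k Hq. apply Hq, HI.
Qed.

Definition ih_interp (p : nat) (Q : list (val L D) -> heap L D -> Prop) :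
  nat -> list (val L D) -> heap L D -> Prop :=
  fun q vs h => psem nil defs q vs h /\ (q = p -> Q vs h).

Lemma psem_ind (p : nat) (Q : list (val L D) -> heap L D -> Prop) :
  (forall r s h, In r (prules (defs p)) ->
     sat nil (ih_interp p Q) s h (rule_formula r) ->
     Q (map (eval_var s) (pparams (defs p))) h) ->
  forall vs h, psem nil defs p vs h -> Q vs h.
Proof.
  intros Hstep vs h Hp.
  enough (HI : closed nil defs (ih_interp p Q)) by exact (proj2 (Hp _ HI) eq_refl).
  intros q r s k Hin Hs. split.
  - apply (psem_closed q r s k Hin). eapply sat_mono; [|exact Hs]. intros ? ? ? Hx; apply Hx.
  - intros ->. exact (Hstep r s k Hin Hs).
Qed.

End LeastFixedPoint.

Section Compositional.
Context {L : Type} (nil : L) {D : Type} (defs : nat -> pdef D).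
Implicit Types (I : nat -> list (val L D) -> heap L D -> Prop) (s : stack L D).

Lemma comp_params_NoDup_inv {E C F H xi} :
  NoDup (comp_params E C F H xi) ->
  E <> F /\ C <> H /\ ~ In (LV F) xi /\ ~ In (DV H) xi.
Proof.
  unfold comp_params; simpl. intro Hn.
  inversion Hn as [|? ? HE Hn1]; subst.
  inversion Hn1 as [|? ? HC Hn2]; subst.
  inversion Hn2 as [|? ? HF Hn3]; subst.
  inversion Hn3 as [|? ? HH Hn4]; subst.
  repeat split.
  - intro; subst; apply HE; simpl; auto.
  - intro; subst; apply HC; simpl; auto.
  - intro; apply HF; simpl; auto.
  - exact HH.
Qed.

Lemma eval_params_upd_hole s E C F H xi a b :
  E <> F -> C <> H -> ~ In (LV F) xi -> ~ In (DV H) xi ->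
  map (eval_var (upd_hole s F H a b)) (comp_params E C F H xi)
  = VL D (sL s E) :: VD L (sD s C) :: VL D a :: VD L b :: map (eval_var s) xi.
Proof.
  intros HEF HCH HFxi HHxi. unfold comp_params. simpl.
  rewrite (proj2 (Nat.eqb_neq E F) HEF), (proj2 (Nat.eqb_neq C H) HCH), !Nat.eqb_refl.
  rewrite map_eval_var_upd_hole; auto.
Qed.

Lemma agree_upd_hole s F H a b vs :
  (forall v, In v vs -> v <> LV F /\ v <> DV H) -> agree s (upd_hole s F H a b) vs.
Proof. intros Hvs v Hv. symmetry. apply eval_var_upd_hole; apply Hvs; auto. Qed.

Lemma syn_compositional_rule_cases {P E C F H xi r} :
  syn_compositional defs P E C F H xi -> In r (prules (defs P)) ->
  is_base_rule E C F H r \/ comp_ind_rule P E C F H xi r.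
Proof.
  intros (_ & _ & rb & rest & Hp & Hb & _ & Hind) Hin.
  apply (Permutation_in _ Hp) in Hin. destruct Hin as [<-|Hin]; auto.
  right. rewrite Forall_forall in Hind; auto.
Qed.

Lemma syn_compositional_base_rule {P E C F H xi} :
  syn_compositional defs P E C F H xi ->
  exists rb, In rb (prules (defs P)) /\ is_base_rule E C F H rb.
Proof.
  intros (_ & _ & rb & rest & Hp & Hb & _). exists rb; split; auto.
  apply (Permutation_in _ (Permutation_sym Hp)); simpl; auto.
Qed.

Lemma sat_base_rule I s h {E C F H} {r : rule D} :
  is_base_rule E C F H r ->
  sat nil I s h (rule_formula r) <->
  sL s E = sL s F /\ sD s C = sD s H /\ forall l f, h l f = None.
Proof.
  intros (HZ & Hp & Hs). unfold rule_formula. rewrite HZ, Hs. simpl fold_right.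
  rewrite sat_fold_FAnd_pure, !Forall_forall. split.
  - intros (Hpu & He). repeat split; auto.
    + apply (Hpu (PLEq (LVar E) (LVar F))).
      apply (Permutation_in _ (Permutation_sym Hp)); simpl; auto.
    + apply (Hpu (PDEq C H)).
      apply (Permutation_in _ (Permutation_sym Hp)); simpl; auto.
  - intros (HE & HC & He). split; auto. intros x Hx.
    apply (Permutation_in _ Hp) in Hx. destruct Hx as [<-|[<-|[]]]; simpl; auto.
Qed.

Lemma sat_rec_atom I s h p g1 g2 F H xi :
  sat nil I s h (satom_formula D (rec_atom p g1 g2 F H xi)) <->
  I p (map (eval_var s) (comp_params g1 g2 F H xi)) h.
Proof. simpl. rewrite map_eval_arg_var. reflexivity. Qed.

Lemma sat_ind_rule I s h {p F H xi} {r : rule D} {S1 S2 g1 g2} :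
  ind_shape p F H xi r S1 S2 g1 g2 ->
  sat nil I s h (rule_formula r) <->
  exists s', (forall v, ~ In v (rZ r) -> eval_var s' v = eval_var s v)
             /\ Forall (pure_sat nil s') (rpure r)
             /\ sep (I p (map (eval_var s') (comp_params g1 g2 F H xi)))
                    (fun k => sat nil I s' k (star_list D (S1 ++ S2))) h.
Proof.
  intros (Hperm & _). rewrite app_assoc, <- Permutation_cons_append in Hperm.
  rewrite sat_rule_formula.
  split; intros (s' & HZ & Hpure & Hsp); exists s'; repeat split; auto.
  - apply (sat_star_list_perm nil I s' _ _ h Hperm) in Hsp. revert Hsp. apply sep_mono; auto.
    intros k. exact (proj1 (sat_rec_atom I s' k p g1 g2 F H xi)).
  - apply (sat_star_list_perm nil I s' _ _ h (Permutation_sym Hperm)). revert Hsp. apply sep_mono; auto.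
    intros k. exact (proj2 (sat_rec_atom I s' k p g1 g2 F H xi)).
Qed.

Lemma comp_ind_rule_hole_fresh {P E C F H xi r} :
  comp_ind_rule P E C F H xi r ->
  exists S1 S2 g1 g2,
    ind_shape P F H xi r S1 S2 g1 g2
    /\ (forall v, In v (rZ r) -> ~ In v (comp_params E C F H xi))
    /\ g1 <> F /\ g2 <> H
    /\ (forall v, In v (flat_map (@pure_vars D) (rpure r)) -> v <> LV F /\ v <> DV H)
    /\ (forall v, In v (flat_map satom_vars (S1 ++ S2)) -> v <> LV F /\ v <> DV H).
Proof.
  intros (S1 & S2 & g1 & g2 & Hsh & _ & HZ & _ & _ & _ & _ & _ & _ & _ & _ & Hbeta).
  destruct (Hbeta (LV F) (or_introl eq_refl)) as (HFpure & HFS1 & HFS2 & HFg1 & _).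
  destruct (Hbeta (DV H) (or_intror eq_refl)) as (HHpure & HHS1 & HHS2 & _ & HHg2).
  exists S1, S2, g1, g2. split; [exact Hsh|]. split; [exact HZ|].
  split; [intros ->; auto|]. split; [intros ->; auto|].
  split; intros v Hv; split; intros ->; auto;
    rewrite flat_map_app in Hv; apply in_app_or in Hv as [Hv|Hv]; auto.
Qed.


Lemma psem_stronger {P P' E C F H xi} :
  syn_compositional defs P E C F H xi ->
  syn_compositional defs P' E C F H xi ->
  stronger nil defs P' P F H xi ->
  forall vs h, psem nil defs P' vs h -> psem nil defs P vs h.
Proof.
  intros HP HP' Hstr. apply psem_ind. intros r s k Hin Hs.
  rewrite (proj1 HP'), <- (proj1 HP).
  destruct (syn_compositional_rule_cases HP' Hin) as [Hb|Hi].
  - destruct (syn_compositional_base_rule HP) as (rb & Hinb & Hbb).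
    apply (psem_closed nil defs P rb s k Hinb).
    apply (sat_base_rule _ _ _ Hbb). exact (proj1 (sat_base_rule _ _ _ Hb) Hs).
  - destruct Hi as (S1 & S2 & g1 & g2 & Hsh & _).
    destruct (Hstr r S1 S2 g1 g2 Hin Hsh) as (r0 & Hin0 & HZ & Hsh0 & Hpure).
    apply (psem_closed nil defs P r0 s k Hin0).
    destruct (proj1 (sat_ind_rule _ _ _ Hsh) Hs) as (s' & Hs'Z & Hpu & Hsp).
    apply (sat_ind_rule _ _ _ Hsh0). exists s'. rewrite HZ.
    split; [exact Hs'Z|split; [exact (Hpure s' Hpu)|]].
    revert Hsp. apply sep_mono; intros k' Hk.
    + exact (proj2 Hk eq_refl).
    + eapply sat_mono; [|exact Hk]. intros ? ? ? Hx; apply Hx.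
Qed.

Definition segment_composes (P : nat) (vs : list (val L D)) (h1 : heap L D) : Prop :=
  match vs with
  | VL _ e :: VD _ c :: VL _ f :: VD _ d :: xs =>
      forall a b h2, hdisjoint h1 h2 ->
        psem nil defs P (VL D f :: VD L d :: VL D a :: VD L b :: xs) h2 ->
        psem nil defs P (VL D e :: VD L c :: VL D a :: VD L b :: xs) (hunion h1 h2)
  | _ => True
  end.


Lemma segment_composes_ind_rule {P E C F H xi r s k} :
  NoDup (comp_params E C F H xi) ->
  (pparams (defs P)) = comp_params E C F H xi ->
  In r (prules (defs P)) -> comp_ind_rule P E C F H xi r ->
  sat nil (ih_interp nil defs P (segment_composes P)) s k (rule_formula r) ->
  segment_composes P (map (eval_var s) (comp_params E C F H xi)) k.
Proof.
  intros Hnodup Hpar Hin Hind Hs.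
  destruct (comp_params_NoDup_inv Hnodup) as (HEF & HCH & HFxi & HHxi).
  destruct (comp_ind_rule_hole_fresh Hind)
    as (S1 & S2 & g1 & g2 & Hsh & HZ & Hg1 & Hg2 & Hpure_hole & Hsp_hole).
  destruct (proj1 (sat_ind_rule _ _ _ Hsh) Hs)
    as (s' & Hs'Z & Hpure & hR & hA & HdRA & HeRA & [_ IH] & HA).
  assert (Hs'par : forall v, In v (comp_params E C F H xi) -> eval_var s' v = eval_var s v).
  { intros v Hv. apply Hs'Z. intro Hvz. exact (HZ v Hvz Hv). }
  assert (HsF : sL s' F = sL s F).
  { specialize (Hs'par (LV F)). simpl in Hs'par. injection Hs'par; auto. }
  assert (HsH : sD s' H = sD s H).
  { specialize (Hs'par (DV H)). simpl in Hs'par. injection Hs'par; auto. }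
  assert (Hsxi : map (eval_var s') xi = map (eval_var s) xi).
  { apply map_ext_in. intros v Hv. apply Hs'par. simpl; tauto. }
  specialize (IH eq_refl). simpl in IH. rewrite HsF, HsH, Hsxi in IH.
  simpl. intros a b h2 Hd2 Hp2.
  destruct (hdisjoint_frame HdRA HeRA Hd2) as (HdR2 & Hd' & He').
  rewrite <- (eval_params_upd_hole s E C F H xi a b), <- Hpar, (heap_ext He') by auto.
  apply (psem_closed nil defs P r _ _ Hin), (sat_ind_rule _ _ _ Hsh).
  (* Same rule, same witnesses, new hole (a, b): only the recursive atom sees it. *)
  exists (upd_hole s' F H a b). split; [|split].
  - intros [m|m] Hv; simpl; [destruct (m =? F)|destruct (m =? H)]; auto;
      [apply (Hs'Z (LV m) Hv)|apply (Hs'Z (DV m) Hv)].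
  - apply (Forall_pure_sat_agree nil s'); auto. apply agree_upd_hole, Hpure_hole.
  - exists (hunion hR h2), hA. split; [exact Hd'|split; [reflexivity|split]].
    + rewrite eval_params_upd_hole by auto. rewrite Hsxi. exact (IH a b h2 HdR2 Hp2).
    + apply (sat_star_list_agree nil _ s'). { apply agree_upd_hole, Hsp_hole. }
      eapply sat_mono; [|exact HA]. intros ? ? ? Hx; apply Hx.
Qed.

Lemma psem_compose {P E C F H xi} :
  syn_compositional defs P E C F H xi ->
  forall vs h1, psem nil defs P vs h1 -> segment_composes P vs h1.
Proof.
  intros HP. apply psem_ind. intros r s k Hin Hs.
  destruct HP as (Hpar & Hnodup & HPr). rewrite Hpar.
  destruct (syn_compositional_rule_cases (conj Hpar (conj Hnodup HPr)) Hin) as [Hb|Hi].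
  - destruct (proj1 (sat_base_rule _ _ _ Hb) Hs) as (HE & HC & Hemp).
    simpl. rewrite HE, HC. intros a b h2 _ Hp2.
    replace (hunion k h2) with h2; [exact Hp2|].
    apply heap_ext. intros l f. unfold hunion. rewrite Hemp. reflexivity.
  - exact (segment_composes_ind_rule Hnodup Hpar Hin Hi Hs).
Qed.

End Compositional.

Theorem theorem3 (L : Type) (nil : L) (D : Type) (defs : nat -> pdef D)
  (P P' E C F H : nat) (xi : list var) (G1 G2 : nat) :
  syn_compositional defs P E C F H xi ->
  syn_compositional defs P' E C F H xi ->
  stronger nil defs P' P F H xi ->
  entails nil defs
    (FPred P' (map var_arg (comp_params E C F H xi)))
    (FPred P (map var_arg (comp_params E C F H xi)))
  /\
  (G1 <> F -> G2 <> H ->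
   entails nil defs
     (FEx (LV F) (FEx (DV H)
        (FStar (FPred P' (map var_arg (comp_params E C F H xi)))
               (FPred P (map var_arg (comp_params F H G1 G2 xi))))))
     (FPred P (map var_arg (comp_params E C G1 G2 xi)))).
Proof.
  intros HP HP' Hstr. split.
  - intros s h _ Hm. exact (psem_stronger nil defs HP HP' Hstr _ _ Hm).
  - intros HG1 HG2 s h _ (l & d & h1 & h2 & Hd & He & H1 & H2).
    change (updD (updL s F l) H d) with (upd_hole s F H l d) in H1, H2.
    destruct (comp_params_NoDup_inv (proj1 (proj2 HP))) as (HEF & HCH & HFxi & HHxi).
    cbn [sat models] in H1, H2 |- *. rewrite map_eval_arg_var in H1, H2 |- *.
    apply (psem_stronger nil defs HP HP' Hstr) in H1.
    rewrite eval_params_upd_hole in H1 by auto.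
    unfold comp_params in H2; simpl in H2.
    rewrite (proj2 (Nat.eqb_neq G1 F) HG1), (proj2 (Nat.eqb_neq G2 H) HG2), !Nat.eqb_refl,
      map_eval_var_upd_hole in H2 by auto.
    rewrite (heap_ext He).
    exact (psem_compose nil defs HP _ _ H1 _ _ h2 Hd H2).
Qed.
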